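(* Let $a,b,c\in\mathbb{R}$ with $ac<0$ and $b\neq 0$. Let $\{P_m(z)\}_{m\geq 0}$ be the sequence of functions of $z$ generated by \[ \sum_{m=0}^\infty P_m(z)\, t^m=\frac{1}{(at^2+bt+c)(1-tz)}. \] Then for every $m\geq 0$, all the zeros of $P_m(z)$ lie in the closed disk $\{z\in\mathbb{C}: |z|\leq 1/|\alpha|\}$, where $\alpha$ is the zero of $at^2+bt+c$ of smallest modulus.
   Context: A sequence $\{P_m(z)\}$ is generated by $f(t,z)$ if, for each $z\in\mathbb{C}$, $f(t,z)$ is analytic in $t$ in a neighborhood of $t=0$ and $P_m(z)$ is the coefficient of $t^m$ in the power series expansion of $f(t,z)$ in $t$ about $0$. *)

From Stdlib Require Import Reals.
From Coquelicot Require Import Coquelicot.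
Open Scope C_scope.

(* By uniqueness of power series coefficients this
   determines P m z as the m-th Taylor coefficient of f(., z) at 0. *)
Definition generates (f : C -> C -> C) (P : nat -> C -> C) : Prop :=
  forall z : C, exists eps : posreal,
    forall t : C, Cmod t < eps ->
      is_pseries (K := C_AbsRing) (V := C_NormedModule) (fun m => P m z) t (f t z).

Definition genfun (a b c : R) (t z : C) : C :=
  / ((RtoC a * t * t + RtoC b * t + RtoC c) * (1 - t * z)).

From Stdlib Require Import Reals Lra Lia.
From Coquelicot Require Import Coquelicot.
Open Scope C_scope.

(* The roots of a t^2 + b t + c are real, of opposite signs and of distinct
   moduli, so with u = 1/alpha and v = 1/beta = r u (-1 < r < 0) the generating
   function is (1/c) / ((1 - u t)(1 - v t)(1 - z t)), and P_m(z) = h_m(u, v, z) / c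
   where h_m is the complete homogeneous symmetric polynomial of degree m.
   By homogeneity a zero z = zeta u of P_m gives h_m(1, r, zeta) = 0, which forces
     zeta^(m+2) (1 - r) = zeta (1 - r^(m+2)) - r (1 - r^(m+1)).
   For |zeta| > 1 the right-hand side has modulus at most
     |zeta| (1 - r) + r (1 - r^(m+1)) (|zeta| - 1) < |zeta| (1 - r) <= |zeta|^(m+2) (1 - r),
   a contradiction. *)

Lemma pow_n_Cpow (x : C) (n : nat) : pow_n x n = x ^ n.
Proof. induction n as [|n IH]; [reflexivity|]. simpl. now rewrite IH. Qed.

Lemma Cmult_integral (x y : C) : x * y = 0 -> x = 0 \/ y = 0.
Proof.
  intros Hxy. apply (f_equal Cmod) in Hxy. rewrite Cmod_mult, Cmod_0 in Hxy.
  destruct (Rmult_integral _ _ Hxy) as [H | H]; apply Cmod_eq_0 in H; auto.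
Qed.

Lemma Cmod_lt_neq (x y : C) : (Cmod x < Cmod y)%R -> x <> y.
Proof. intros Hxy ->. lra. Qed.

Lemma Cmod_lt_1_neq (q : C) : (Cmod q < 1)%R -> 1 - q <> 0.
Proof. intros Hq. apply Cminus_eq_contra, not_eq_sym, Cmod_lt_neq. now rewrite Cmod_1. Qed.

Lemma sum_n_geom_C (q : C) (n : nat) :
  q <> 1 -> sum_n (fun k => q ^ k) n = (1 - q ^ S n) / (1 - q).
Proof.
  intros Hq. apply not_eq_sym, Cminus_eq_contra in Hq.
  induction n as [|n IH].
  - rewrite sum_O. simpl. field. exact Hq.
  - rewrite sum_Sn, IH. change plus with Cplus. simpl. field. exact Hq.
Qed.

Lemma is_series_geom_C (q : C) :
  (Cmod q < 1)%R -> is_series (fun n => q ^ n) (/ (1 - q)).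
Proof.
  intros Hq.
  assert (Hq1 : q <> 1) by (apply Cmod_lt_neq; now rewrite Cmod_1).
  assert (Hq0 := Cmod_lt_1_neq q Hq).
  assert (Hd : (0 < Cmod (1 - q))%R) by (apply Cmod_gt_0; exact Hq0).
  apply filterlim_locally. intros eps.
  assert (Hq' : (Rabs (Cmod q) < 1)%R) by (rewrite Rabs_pos_eq by apply Cmod_ge_0; exact Hq).
  destruct (pow_lt_1_zero _ Hq' (eps * Cmod (1 - q))) as [N HN].
  { apply Rmult_lt_0_compat; [apply cond_pos | exact Hd]. }
  exists N. intros n Hn. apply (norm_compat1 (K := C_AbsRing)).
  change norm with Cmod. change minus with Cminus.
  rewrite sum_n_geom_C by exact Hq1.
  replace ((1 - q ^ S n) / (1 - q) - / (1 - q)) with (- q ^ S n / (1 - q))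
    by (field; exact Hq0).
  rewrite Cmod_div, Cmod_opp, Cmod_pow by exact Hq0.
  apply Rlt_div_l; [exact Hd|].
  specialize (HN (S n) (le_S _ _ Hn)).
  rewrite Rabs_pos_eq in HN by (apply pow_le, Cmod_ge_0). exact HN.
Qed.

Lemma is_pseries_geom_C (w t : C) :
  (Cmod (w * t) < 1)%R -> is_pseries (fun n => w ^ n) t (/ (1 - w * t)).
Proof.
  intros Hwt. eapply is_series_ext; [|exact (is_series_geom_C _ Hwt)].
  intros n. change scal with Cmult. rewrite pow_n_Cpow, Cpow_mult_l. apply Cmult_comm.
Qed.

Lemma sum_n_C (f : nat -> C) (n : nat) :
  sum_n f n = (sum_n (fun k => Re (f k)) n, sum_n (fun k => Im (f k)) n).
Proof.
  induction n as [|n IH].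
  - rewrite !sum_O. apply surjective_pairing.
  - rewrite !sum_Sn, IH. reflexivity.
Qed.

Lemma is_pseries_Re_Im (d : nat -> C) (x : R) (l : C) :
  is_pseries d (RtoC x) l ->
  is_pseries (fun n => Re (d n)) x (Re l) /\ is_pseries (fun n => Im (d n)) x (Im l).
Proof.
  intros Hd.
  assert (Hterm : forall k,
    @scal C_AbsRing C_NormedModule (pow_n (K := AbsRing.Ring C_AbsRing) (RtoC x) k) (d k)
    = (@scal R_AbsRing R_NormedModule (pow_n (K := AbsRing.Ring R_AbsRing) x k) (Re (d k)),
       @scal R_AbsRing R_NormedModule (pow_n (K := AbsRing.Ring R_AbsRing) x k) (Im (d k)))).
  { intros k. rewrite pow_n_Cpow, pow_n_pow, <- RtoC_pow.
    destruct (d k). cbn. unfold Cmult, RtoC; simpl. f_equal; ring. }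
  unfold is_pseries, is_series in *.
  (* The uniform structure of C is the product one, so a C-ball is a pair of R-balls. *)
  split; apply filterlim_locally; intros eps;
    eapply filter_imp, (proj1 (filterlim_locally _ l) Hd eps);
    intros n Hn; cbv beta in Hn;
    rewrite (sum_n_ext (G := NormedModule.AbelianMonoid C_AbsRing C_NormedModule) _ _ n Hterm),
      sum_n_C in Hn;
    apply Hn.
Qed.

Lemma CV_radius_pos (a : nat -> R) (eps : R) :
  (0 < eps)%R -> (forall x, (Rabs x < eps)%R -> ex_pseries a x) -> Rbar_lt 0 (CV_radius a).
Proof.
  intros Heps Ha.
  set (x := (eps / 2)%R).
  assert (Hx : (0 < Rabs x < eps)%R) by (unfold x; rewrite Rabs_pos_eq; lra).
  assert (Hlim : is_lim_seq (fun n => (a n * x ^ n)%R) 0).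
  { eapply is_lim_seq_ext, ex_series_lim_0, Ha, Hx.
    intros n. simpl. change scal with Rmult. rewrite pow_n_pow. apply Rmult_comm. }
  destruct (Rbar_lt_dec (CV_radius a) (Rabs x)) as [Hout | Hin].
  - exfalso. exact (CV_disk_outside a x Hout Hlim).
  - apply Rbar_not_lt_le in Hin. eapply Rbar_lt_le_trans; [|exact Hin]. apply Hx.
Qed.

Lemma is_pseries_coef_unique_R (a b : nat -> R) (f : R -> R) (eps : R) :
  (0 < eps)%R ->
  (forall x, (Rabs x < eps)%R -> is_pseries a x (f x)) ->
  (forall x, (Rabs x < eps)%R -> is_pseries b x (f x)) ->
  forall n, a n = b n.
Proof.
  intros Heps Ha Hb n.
  apply PSeries_ext_recip.
  - apply (CV_radius_pos a eps Heps). intros x Hx. eexists. now apply Ha.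
  - apply (CV_radius_pos b eps Heps). intros x Hx. eexists. now apply Hb.
  - exists (mkposreal eps Heps). intros y Hy.
    assert (Hy' : (Rabs y < eps)%R) by (rewrite <- (Rminus_0_r y); exact Hy).
    now rewrite (is_pseries_unique a y (f y) (Ha y Hy')),
      (is_pseries_unique b y (f y) (Hb y Hy')).
Qed.

Lemma is_pseries_coef_unique_C (a b : nat -> C) (f : C -> C) (eps : R) :
  (0 < eps)%R ->
  (forall t, (Cmod t < eps)%R -> is_pseries a t (f t)) ->
  (forall t, (Cmod t < eps)%R -> is_pseries b t (f t)) ->
  forall n, a n = b n.
Proof.
  intros Heps Ha Hb n.
  assert (Hreal : forall d : nat -> C,
    (forall t, (Cmod t < eps)%R -> is_pseries d t (f t)) ->
    forall x, (Rabs x < eps)%R ->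
      is_pseries (fun k => Re (d k)) x (Re (f x)) /\ is_pseries (fun k => Im (d k)) x (Im (f x))).
  { intros d Hd x Hx. apply is_pseries_Re_Im, Hd. now rewrite Cmod_R. }
  apply injective_projections.
  - apply (is_pseries_coef_unique_R (fun k => Re (a k)) (fun k => Re (b k))
      (fun x => Re (f x)) eps Heps); intros x Hx.
    + now apply (Hreal a Ha).
    + now apply (Hreal b Hb).
  - apply (is_pseries_coef_unique_R (fun k => Im (a k)) (fun k => Im (b k))
      (fun x => Im (f x)) eps Heps); intros x Hx.
    + now apply (Hreal a Ha).
    + now apply (Hreal b Hb).
Qed.

Lemma generates_coef (f : C -> C -> C) (P : nat -> C -> C) (p : nat -> C) (z : C) (eps : R) :
  generates f P -> (0 < eps)%R ->
  (forall t, (Cmod t < eps)%R -> is_pseries p t (f t z)) ->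
  forall n, P n z = p n.
Proof.
  intros Hgen Heps Hp.
  destruct (Hgen z) as [delta Hdelta].
  apply (is_pseries_coef_unique_C _ _ (fun t => f t z) (Rmin delta eps)).
  - apply Rmin_pos; [apply cond_pos | exact Heps].
  - intros t Ht. apply Hdelta. eapply Rlt_le_trans; [exact Ht | apply Rmin_l].
  - intros t Ht. apply Hp. eapply Rlt_le_trans; [exact Ht | apply Rmin_r].
Qed.

(* Lagrange form of the complete homogeneous symmetric polynomial h_m(x, y, w);
   meaningful only for pairwise distinct x, y, w. *)
Definition complete_hom3 (x y w : C) (m : nat) : C :=
  x ^ S (S m) / ((x - y) * (x - w)) + y ^ S (S m) / ((y - x) * (y - w))
  + w ^ S (S m) / ((w - x) * (w - y)).

Section PairwiseDistinct.

Variables x y w : C.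
Hypotheses (Hxy : x <> y) (Hxw : x <> w) (Hyw : y <> w).

Let Dxy := Cminus_eq_contra _ _ Hxy.
Let Dxw := Cminus_eq_contra _ _ Hxw.
Let Dyw := Cminus_eq_contra _ _ Hyw.
Let Dyx := Cminus_eq_contra _ _ (not_eq_sym Hxy).
Let Dwx := Cminus_eq_contra _ _ (not_eq_sym Hxw).
Let Dwy := Cminus_eq_contra _ _ (not_eq_sym Hyw).

Lemma is_pseries_complete_hom3 (t : C) :
  (Cmod (x * t) < 1)%R -> (Cmod (y * t) < 1)%R -> (Cmod (w * t) < 1)%R ->
  is_pseries (complete_hom3 x y w) t (/ ((1 - x * t) * (1 - y * t) * (1 - w * t))).
Proof.
  intros Hx Hy Hw.
  assert (Hcomm : forall u v : C, mult u v = mult v u) by (intros; apply Cmult_comm).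
  set (A := x ^ 2 / ((x - y) * (x - w))).
  set (B := y ^ 2 / ((y - x) * (y - w))).
  set (D := w ^ 2 / ((w - x) * (w - y))).
  assert (Hser := is_pseries_plus _ _ _ _ _
    (is_pseries_plus _ _ _ _ _
      (is_pseries_scal A _ _ _ (Hcomm _ _) (is_pseries_geom_C x t Hx))
      (is_pseries_scal B _ _ _ (Hcomm _ _) (is_pseries_geom_C y t Hy)))
    (is_pseries_scal D _ _ _ (Hcomm _ _) (is_pseries_geom_C w t Hw))).
  replace (/ _) with (A * / (1 - x * t) + B * / (1 - y * t) + D * / (1 - w * t)).
  - eapply is_pseries_ext; [|exact Hser].
    intros n. unfold PS_plus, PS_scal, complete_hom3, A, B, D.
    change scal with Cmult. change plus with Cplus. simpl. field; tauto.
  - apply Cmod_lt_1_neq in Hx, Hy, Hw.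
    unfold A, B, D. field; tauto.
Qed.

Lemma complete_hom3_scale (k : C) (m : nat) :
  k <> 0 -> complete_hom3 (k * x) (k * y) (k * w) m = k ^ m * complete_hom3 x y w m.
Proof.
  intros Hk. unfold complete_hom3.
  assert (Hfactor : forall u v, k * u - k * v = k * (u - v)) by (intros; ring).
  rewrite !Hfactor, !Cpow_mult_l. simpl. field; tauto.
Qed.

Lemma complete_hom3_eq0 (m : nat) :
  complete_hom3 x y w m = 0 ->
  w ^ S (S m) * (x - y) = w * (x ^ S (S m) - y ^ S (S m)) - x * y * (x ^ S m - y ^ S m).
Proof.
  intros H0.
  transitivity (w ^ S (S m) * (x - y) - (x - y) * (x - w) * (y - w) * complete_hom3 x y w m).
  - rewrite H0. ring.
  - unfold complete_hom3. simpl. field; tauto.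
Qed.

End PairwiseDistinct.

Lemma outside_unit_disk_neq (r : R) (zeta : C) (m : nat) :
  (-1 < r < 0)%R -> (1 < Cmod zeta)%R ->
  zeta ^ S (S m) * (1 - r) <> zeta * (1 - r ^ S (S m)) - r * (1 - r ^ S m).
Proof.
  intros Hr Hzeta Hid.
  set (s := (r ^ S m)%R).
  assert (Hs : (Rabs s < 1)%R).
  { unfold s. rewrite <- RPow_abs.
    apply pow_lt_1_compat; [split; [apply Rabs_pos | apply Rabs_def1; lra] | lia]. }
  apply Rabs_def2 in Hs.
  rewrite <- !RtoC_pow in Hid. change (r ^ S (S m))%R with (r * s)%R in Hid. fold s in Hid.
  rewrite <- !RtoC_minus, <- RtoC_mult in Hid.
  assert (Hnorm : (Cmod zeta ^ S (S m) * (1 - r) <= Cmod zeta * (1 - r * s) - r * (1 - s))%R).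
  { rewrite <- Cmod_pow, <- (Rabs_pos_eq (1 - r)), <- Cmod_R, <- Cmod_mult, Hid by lra.
    eapply Rle_trans; [apply Cmod_triangle|].
    rewrite Cmod_opp, Cmod_mult, !Cmod_R, (Rabs_pos_eq (1 - r * s)), Rabs_left by nra.
    lra. }
  assert (Hpow : (Cmod zeta <= Cmod zeta ^ S (S m))%R).
  { rewrite <- (Rmult_1_r (Cmod zeta)) at 1.
    change (Cmod zeta ^ S (S m))%R with (Cmod zeta * Cmod zeta ^ S m)%R.
    apply Rmult_le_compat_l; [apply Cmod_ge_0 | apply pow_R1_Rle; lra]. }
  (* |zeta| (1 - r s) - r (1 - s) = |zeta| (1 - r) + r (1 - s) (|zeta| - 1) *)
  assert (0 < - r * (1 - s) * (Cmod zeta - 1))%R by (repeat apply Rmult_lt_0_compat; lra).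
  nra.
Qed.

Lemma complete_hom3_neq0 (u z : C) (r : R) (m : nat) :
  u <> 0 -> (-1 < r < 0)%R -> (Cmod u < Cmod z)%R -> complete_hom3 u (r * u) z m <> 0.
Proof.
  intros Hu Hr Hz H0.
  set (zeta := z / u).
  assert (Hzeta : (1 < Cmod zeta)%R).
  { unfold zeta. rewrite Cmod_div by exact Hu.
    apply Rlt_div_r; [apply Cmod_gt_0, Hu | now rewrite Rmult_1_l]. }
  assert (Hr1 : (Cmod r < 1)%R) by (rewrite Cmod_R; apply Rabs_def1; lra).
  assert (D1r : (1 : C) <> r) by (apply not_eq_sym, Cmod_lt_neq; now rewrite Cmod_1).
  assert (D1zeta : (1 : C) <> zeta) by (apply Cmod_lt_neq; now rewrite Cmod_1).
  assert (Drzeta : RtoC r <> zeta) by (apply Cmod_lt_neq; lra).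
  replace (complete_hom3 u (r * u) z m) with (complete_hom3 (u * 1) (u * r) (u * zeta) m)
    in H0 by (unfold zeta; f_equal; field; exact Hu).
  rewrite complete_hom3_scale in H0 by assumption.
  apply Cmult_integral in H0 as [H0 | H0].
  - exact (Cpow_nz u m Hu H0).
  - apply complete_hom3_eq0 in H0; [|assumption..].
    rewrite !Cpow_1_l, Cmult_1_l in H0.
    exact (outside_unit_disk_neq r zeta m Hr Hzeta H0).
Qed.

Lemma quadratic_real_roots (a b c : R) :
  a <> 0%R -> (0 <= b * b - 4 * a * c)%R ->
  exists r1 r2 : R, b = (- (a * (r1 + r2)))%R /\ c = (a * r1 * r2)%R.
Proof.
  intros Ha Hdisc.
  set (s := sqrt (b * b - 4 * a * c)).
  assert (Hs : (s * s = b * b - 4 * a * c)%R) by apply sqrt_sqrt, Hdisc.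
  exists ((- b + s) / (2 * a))%R, ((- b - s) / (2 * a))%R. split.
  - field. exact Ha.
  - replace (a * ((- b + s) / (2 * a)) * ((- b - s) / (2 * a)))%R
      with ((b * b - s * s) / (4 * a))%R by (field; exact Ha).
    rewrite Hs. field. exact Ha.
Qed.

Lemma quadratic_factor (a r1 r2 : R) (t : C) :
  RtoC a * t * t + RtoC (- (a * (r1 + r2))) * t + RtoC (a * r1 * r2)
  = RtoC a * (t - r1) * (t - r2).
Proof. rewrite RtoC_opp, !RtoC_mult, RtoC_plus. ring. Qed.

Lemma root_ratio_bounds (a al be : R) :
  (a * (a * al * be) < 0)%R -> (- (a * (al + be)) <> 0)%R -> (Rabs al <= Rabs be)%R ->
  (-1 < al / be < 0)%R.
Proof.
  intros Hac Hb Hle.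
  assert (Hprod : (al * be < 0)%R) by nra.
  assert (Hbe : be <> 0%R) by (intros ->; lra).
  assert (Hlt : (Rabs al < Rabs be)%R).
  { destruct (Rle_lt_or_eq_dec _ _ Hle) as [Hlt | Heq]; [exact Hlt|].
    (* equal moduli and opposite signs give al + be = 0, i.e. b = 0 *)
    exfalso. apply Hb. unfold Rabs in Heq.
    destruct (Rcase_abs al), (Rcase_abs be); nra. }
  assert (Hratio : (Rabs (al / be) < 1)%R).
  { rewrite Rabs_div by exact Hbe. apply Rlt_div_l; [apply Rabs_pos_lt, Hbe | lra]. }
  apply Rabs_def2 in Hratio.
  split; [lra|].
  replace (al / be)%R with (al * be / (be * be))%R by (field; exact Hbe).
  apply Rdiv_neg_pos; [exact Hprod | nra].
Qed.

Lemma is_pseries_genfun (a b c : R) (u v z t : C) :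
  RtoC c <> 0 ->
  (forall s, RtoC a * s * s + RtoC b * s + RtoC c = RtoC c * (1 - u * s) * (1 - v * s)) ->
  u <> v -> u <> z -> v <> z ->
  (Cmod (u * t) < 1)%R -> (Cmod (v * t) < 1)%R -> (Cmod (z * t) < 1)%R ->
  is_pseries (fun n => / RtoC c * complete_hom3 u v z n) t (genfun a b c t z).
Proof.
  intros Hc Hquad Huv Huz Hvz Hut Hvt Hzt.
  assert (Hcomm : forall x y : C, mult x y = mult y x) by (intros; apply Cmult_comm).
  replace (genfun a b c t z) with (/ RtoC c * / ((1 - u * t) * (1 - v * t) * (1 - z * t))).
  - exact (is_pseries_scal _ _ _ _ (Hcomm _ _)
      (is_pseries_complete_hom3 u v z Huv Huz Hvz t Hut Hvt Hzt)).
  - apply Cmod_lt_1_neq in Hut, Hvt, Hzt. rewrite Cmult_comm in Hzt.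
    unfold genfun. rewrite Hquad. field. tauto.
Qed.

Lemma generates_complete_hom3 (a b c : R) (u v z : C) (P : nat -> C -> C) :
  RtoC c <> 0 ->
  (forall s, RtoC a * s * s + RtoC b * s + RtoC c = RtoC c * (1 - u * s) * (1 - v * s)) ->
  (Cmod v < Cmod u)%R -> (Cmod u < Cmod z)%R ->
  generates (genfun a b c) P ->
  forall n, P n z = / RtoC c * complete_hom3 u v z n.
Proof.
  intros Hc Hquad Hvu Huz Hgen.
  assert (Hz : (0 < Cmod z)%R) by (pose proof (Cmod_ge_0 u); lra).
  apply (generates_coef _ _ _ z (/ Cmod z) Hgen (Rinv_0_lt_compat _ Hz)).
  intros t Ht.
  assert (Hsmall : forall w, (Cmod w <= Cmod z)%R -> (Cmod (w * t) < 1)%R).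
  { intros w Hw. rewrite Cmod_mult.
    apply (Rmult_lt_compat_l (Cmod z)) in Ht; [|exact Hz]. rewrite Rinv_r in Ht by lra.
    pose proof (Cmod_ge_0 t). nra. }
  apply is_pseries_genfun; try assumption.
  - apply not_eq_sym, Cmod_lt_neq, Hvu.
  - apply Cmod_lt_neq, Huz.
  - apply Cmod_lt_neq. lra.
  - apply Hsmall. lra.
  - apply Hsmall. lra.
  - apply Hsmall. lra.
Qed.

Lemma genfun_zero_bound (a b c al be : R) (P : nat -> C -> C) (m : nat) (z : C) :
  (a * c < 0)%R -> b <> 0%R -> b = (- (a * (al + be)))%R -> c = (a * al * be)%R ->
  (Rabs al <= Rabs be)%R -> generates (genfun a b c) P -> P m z = 0 ->
  (Cmod z <= / Rabs al)%R.
Proof.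
  intros Hac Hb0 Hb Hc Hle Hgen HPz. subst b c.
  set (r := (al / be)%R).
  assert (Hr : (-1 < r < 0)%R) by (apply (root_ratio_bounds a); assumption).
  assert (Hal : al <> 0%R) by (intros ->; lra).
  assert (Hbe : be <> 0%R) by (intros ->; lra).
  assert (Hc0 : RtoC (a * al * be) <> 0) by (intros E; injection E as E; rewrite E in Hac; lra).
  set (u := RtoC (/ al)).
  assert (Hu0 : u <> 0) by (intros E; injection E; apply Rinv_neq_0_compat, Hal).
  assert (Hu : Cmod u = (/ Rabs al)%R) by (unfold u; rewrite Cmod_R; apply Rabs_inv).
  assert (Hru : (Cmod (r * u) < Cmod u)%R).
  { rewrite Cmod_mult, Cmod_R. assert (Rabs r < 1)%R by (apply Rabs_def1; lra).
    apply Cmod_gt_0 in Hu0. nra. }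
  assert (Hquad : forall s, RtoC a * s * s + RtoC (- (a * (al + be))) * s + RtoC (a * al * be)
                            = RtoC (a * al * be) * (1 - u * s) * (1 - r * u * s)).
  { intros s. unfold u, r.
    rewrite RtoC_div, RtoC_inv, RtoC_opp, !RtoC_mult, RtoC_plus by assumption.
    field. split; intros E; injection E; assumption. }
  apply Rnot_lt_le. intros Hz. rewrite <- Hu in Hz.
  rewrite (generates_complete_hom3 _ _ _ u (r * u) z P Hc0 Hquad Hru Hz Hgen) in HPz.
  apply (complete_hom3_neq0 u z r m Hu0 Hr Hz).
  replace (complete_hom3 u (r * u) z m)
    with (RtoC (a * al * be) * (/ RtoC (a * al * be) * complete_hom3 u (r * u) z m))
    by (field; exact Hc0).
  rewrite HPz. ring.
Qed.

Theorem theorem1 (a b c : R) (P : nat -> C -> C) (alpha : C) :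
  (a * c < 0)%R -> b <> 0%R ->
  generates (genfun a b c) P ->
  RtoC a * alpha * alpha + RtoC b * alpha + RtoC c = 0 ->
  (forall beta : C, RtoC a * beta * beta + RtoC b * beta + RtoC c = 0 ->
     (Cmod alpha <= Cmod beta)%R) ->
  forall (m : nat) (z : C), P m z = 0 -> (Cmod z <= / Cmod alpha)%R.
Proof.
  intros Hac Hb Hgen Hroot Hmin m z HPz.
  assert (Ha : a <> 0%R) by (intros ->; lra).
  destruct (quadratic_real_roots a b c Ha ltac:(nra)) as (r1 & r2 & Hb12 & Hc12).
  assert (Hfactor : forall t, RtoC a * t * t + RtoC b * t + RtoC c = RtoC a * (t - r1) * (t - r2))
    by (intros t; rewrite Hb12, Hc12; apply quadratic_factor).
  assert (Hr1 := Hmin r1 ltac:(rewrite Hfactor; ring)).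
  assert (Hr2 := Hmin r2 ltac:(rewrite Hfactor; ring)).
  rewrite Hfactor in Hroot.
  apply Cmult_integral in Hroot as [Hroot | Hroot2].
  - apply Cmult_integral in Hroot as [Ha0 | Hroot1].
    + injection Ha0 as Ha0. contradiction.
    + apply Ceq_minus in Hroot1. subst alpha. rewrite !Cmod_R in *.
      exact (genfun_zero_bound a b c r1 r2 P m z Hac Hb Hb12 Hc12 Hr2 Hgen HPz).
  - apply Ceq_minus in Hroot2. subst alpha. rewrite !Cmod_R in *.
    apply (genfun_zero_bound a b c r2 r1 P m z); try assumption.
    + rewrite Hb12. ring.
    + rewrite Hc12. ring.
Qed.
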